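(* Assume that for every packing $\mathcal{F}$ of unit balls in $\mathbb{E}^3$ containing $\mathbf{B}$, with $\mathbf{P}$ the Voronoi cell of $\mathcal{F}$ assigned to $\mathbf{B}$, one has $\frac{\mathrm{vol}_3(\mathbf{B})}{\mathrm{vol}_3(\mathbf{P}\cap\sqrt2\,\mathbf{B})}<0.7547$. Then for every packing $\{\mathbf{c}_1+\mathbf{B},\dots,\mathbf{c}_n+\mathbf{B}\}$ of $n\ge1$ unit balls in $\mathbb{E}^3$ and $\hat r:=1.58731$, $$\frac{n\,\mathrm{vol}_3(\mathbf{B})}{\mathrm{vol}_3\left(\bigcup_{i=1}^n(\mathbf{c}_i+\hat r\mathbf{B})\right)}<0.7547.$$
   Context: $\mathbf{B}$ is the closed unit ball centered at the origin of $\mathbb{E}^3$; a packing means pairwise disjoint interiors. The Voronoi cell assigned to a ball of the packing is the set of points at least as close to its center as to any other center of the packing. *)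

From Stdlib Require Import Reals Lra ZArith List.
Open Scope R_scope.

Definition R3 := (R * R * R)%type.

Definition vsub (x y : R3) : R3 :=
  let '(x1, x2, x3) := x in let '(y1, y2, y3) := y in (x1 - y1, x2 - y2, x3 - y3).

Definition norm3 (x : R3) : R :=
  let '(x1, x2, x3) := x in sqrt (x1 * x1 + x2 * x2 + x3 * x3).

Definition dist3 (x y : R3) : R := norm3 (vsub x y).

Definition cball (c : R3) (r : R) (x : R3) : Prop := dist3 x c <= r.
Definition oball (c : R3) (r : R) (x : R3) : Prop := dist3 x c < r.

Definition origin : R3 := (0, 0, 0).

Definition Bunit : R3 -> Prop := cball origin 1.

Definition dcube (k : nat) (ijl : Z * Z * Z) (x : R3) : Prop :=
  let '(i, j, l) := ijl in
  let '(x1, x2, x3) := x in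
  let h := / (2 ^ k) in
  IZR i * h <= x1 <= (IZR i + 1) * h /\
  IZR j * h <= x2 <= (IZR j + 1) * h /\
  IZR l * h <= x3 <= (IZR l + 1) * h.

Definition inner_approx (S : R3 -> Prop) (a : R) : Prop :=
  exists (k : nat) (cs : list (Z * Z * Z)),
    NoDup cs /\
    (forall c, In c cs -> forall x, dcube k c x -> S x) /\
    a = INR (length cs) / (8 ^ k).

(* vol3 S v : v is the (inner Jordan) volume of S. *)
Definition vol3 (S : R3 -> Prop) (v : R) : Prop := is_lub (inner_approx S) v.

(* A (possibly infinite) packing of unit balls, given by its set of centers:
   distinct balls have disjoint interiors. *)
Definition unit_ball_packing (F : R3 -> Prop) : Prop :=
  forall c c', F c -> F c' -> c <> c' ->
    forall x, ~ (oball c 1 x /\ oball c' 1 x).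

Definition voronoi0 (F : R3 -> Prop) (x : R3) : Prop :=
  forall c, F c -> dist3 x origin <= dist3 x c.

(* Translate the packing so that [c i] is the origin: by hypothesis the truncated
   Voronoi cell [P_i ∩ √2 B] of each ball has volume greater than
   [vol(B) / 0.7547], and it lies in [c i + r̂ B] because [√2 < r̂].  Distinct
   Voronoi cells meet only in bisector planes, so no dyadic cube lies in two of
   them, and inner cube approximations of the [n] cells add up inside the union,
   giving [vol(union) > n vol(B) / 0.7547].  Since the volume is an inner Jordan
   content on a fixed dyadic grid, which the translations by [c i] do not
   preserve, each approximation is refined before being translated. *)

From Stdlib Require Import Reals Lra Lia Psatz ZArith List Classical.
Open Scope R_scope.

Definition vadd (x y : R3) : R3 :=
  let '(x1, x2, x3) := x in let '(y1, y2, y3) := y in (x1 + y1, x2 + y2, x3 + y3).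

Lemma vsub_vadd x c : vsub (vadd x c) c = x.
Proof. destruct x as [[? ?] ?], c as [[? ?] ?]; simpl; f_equal; [f_equal|]; ring. Qed.

Lemma vsub_diag c : vsub c c = origin.
Proof. destruct c as [[? ?] ?]; unfold origin; simpl; rewrite !Rminus_diag; reflexivity. Qed.

Lemma dist3_vsub2 x y z : dist3 (vsub x z) (vsub y z) = dist3 x y.
Proof.
  destruct x as [[? ?] ?], y as [[? ?] ?], z as [[? ?] ?]; unfold dist3, norm3; simpl.
  f_equal; ring.
Qed.

Lemma dist3_vsub_origin x z : dist3 (vsub x z) origin = dist3 x z.
Proof.
  destruct x as [[? ?] ?], z as [[? ?] ?]; unfold dist3, norm3; simpl; f_equal; ring.
Qed.

Lemma dist3_diag x : dist3 x x = 0.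
Proof.
  destruct x as [[? ?] ?]; unfold dist3, norm3; simpl; rewrite !Rminus_diag.
  replace (0 * 0 + 0 * 0 + 0 * 0) with 0 by ring; apply sqrt_0.
Qed.

Lemma dist3_eq_sqr x1 x2 x3 a1 a2 a3 b1 b2 b3 :
  dist3 (x1, x2, x3) (a1, a2, a3) = dist3 (x1, x2, x3) (b1, b2, b3) ->
  (x1 - a1) * (x1 - a1) + (x2 - a2) * (x2 - a2) + (x3 - a3) * (x3 - a3) =
  (x1 - b1) * (x1 - b1) + (x2 - b2) * (x2 - b2) + (x3 - b3) * (x3 - b3).
Proof.
  unfold dist3, norm3; simpl; intro H.
  apply sqrt_inj; [| | exact H]; repeat apply Rplus_le_le_0_compat; apply Rle_0_sqr.
Qed.

Definition cube_in (S : R3 -> Prop) (k : nat) (d : Z * Z * Z) : Prop :=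
  forall x, dcube k d x -> S x.

Definition cubes_vol (k : nat) (l : list (Z * Z * Z)) : R := INR (length l) / 8 ^ k.

Definition eventually_inner_gt (S : R3 -> Prop) (t : R) : Prop :=
  exists M, forall m, (M <= m)%nat ->
    exists l, NoDup l /\ (forall d, In d l -> cube_in S m d) /\ cubes_vol m l > t.

Lemma cubes_vol_app k l1 l2 : cubes_vol k (l1 ++ l2) = cubes_vol k l1 + cubes_vol k l2.
Proof.
  unfold cubes_vol; rewrite length_app, plus_INR; field; apply pow_nonzero; lra.
Qed.

Lemma vol3_ge0 S v : vol3 S v -> 0 <= v.
Proof.
  intros Hv; apply Hv; exists 0%nat, nil; split; [constructor|split]; [intros _ []|simpl; field].
Qed.

(* The cube is not contained in the bisector plane of [a] and [b]: compare the
   corner [y] with the three corners [y + h e_i]. *)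
Lemma dcube_equidistant_eq k d a b :
  (forall x, dcube k d x -> dist3 x a = dist3 x b) -> a = b.
Proof.
  destruct d as [[i j] l], a as [[a1 a2] a3], b as [[b1 b2] b3]; intro H.
  set (h := / 2 ^ k).
  assert (Hh : 0 < h) by (apply Rinv_0_lt_compat, pow_lt; lra).
  set (y1 := IZR i * h); set (y2 := IZR j * h); set (y3 := IZR l * h).
  assert (Hc : forall e1 e2 e3, 0 <= e1 <= h -> 0 <= e2 <= h -> 0 <= e3 <= h ->
     dcube k (i, j, l) (y1 + e1, y2 + e2, y3 + e3)).
  { intros; simpl; fold h; unfold y1, y2, y3; lra. }
  assert (E0 := dist3_eq_sqr _ _ _ _ _ _ _ _ _ (H _ (Hc 0 0 0 ltac:(lra) ltac:(lra) ltac:(lra)))).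
  assert (E1 := dist3_eq_sqr _ _ _ _ _ _ _ _ _ (H _ (Hc h 0 0 ltac:(lra) ltac:(lra) ltac:(lra)))).
  assert (E2 := dist3_eq_sqr _ _ _ _ _ _ _ _ _ (H _ (Hc 0 h 0 ltac:(lra) ltac:(lra) ltac:(lra)))).
  assert (E3 := dist3_eq_sqr _ _ _ _ _ _ _ _ _ (H _ (Hc 0 0 h ltac:(lra) ltac:(lra) ltac:(lra)))).
  assert (F1 : h * (a1 - b1) = 0) by nra.
  assert (F2 : h * (a2 - b2) = 0) by nra.
  assert (F3 : h * (a3 - b3) = 0) by nra.
  apply Rmult_integral in F1 as [F1|F1]; [lra|].
  apply Rmult_integral in F2 as [F2|F2]; [lra|].
  apply Rmult_integral in F3 as [F3|F3]; [lra|].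
  f_equal; [f_equal|]; lra.
Qed.

Lemma NoDup_list_prod {A B} (l1 : list A) (l2 : list B) :
  NoDup l1 -> NoDup l2 -> NoDup (list_prod l1 l2).
Proof.
  induction 1 as [|a l Hn Hnd IH]; intros H2; simpl; [constructor|].
  apply NoDup_app; auto.
  - apply NoDup_map_NoDup_ForallPairs; auto. intros x y _ _ E; now inversion E.
  - intros [x y] Hin1 Hin2. apply in_map_iff in Hin1 as [z [Ez _]]. inversion Ez; subst.
    now apply in_prod_iff in Hin2 as [Ha _].
Qed.

Lemma Z_mul_add_inj (L p p' s s' : Z) : (0 <= s < L)%Z -> (0 <= s' < L)%Z ->
  (p * L + s = p' * L + s')%Z -> p = p' /\ s = s'.
Proof. intros. assert (p = p') by nia. subst; lia. Qed.

(* Subcube of level [k + j] of the level-[k] cube [(p, q, r)], with [L = 2^j]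
   subdivisions per side, offset [s] and extra shift [u].  With [u = up (c E)],
   [E = 2^(k+j)], and offsets [0 <= s <= L - 2], it lies inside the parent cube
   translated by [c]. *)
Definition shifted_subcube (L u1 u2 u3 : Z) (a : (Z * Z * Z) * ((Z * Z) * Z)) : Z * Z * Z :=
  let '((p, q, r), ((s1, s2), s3)) := a in
  ((p * L + u1 + s1, q * L + u2 + s2), r * L + u3 + s3)%Z.

Definition offsets (L : nat) : list Z := map Z.of_nat (seq 0 (L - 1)).

Definition shifted_subcubes (L : nat) (u1 u2 u3 : Z) (cs : list (Z * Z * Z)) :=
  map (shifted_subcube (Z.of_nat L) u1 u2 u3)
    (list_prod cs (list_prod (list_prod (offsets L) (offsets L)) (offsets L))).

Lemma in_offsets L s : In s (offsets L) -> (0 <= s)%Z /\ (s + 1 <= Z.of_nat L - 1)%Z.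
Proof. intros Hs; apply in_map_iff in Hs as [t [<- Ht]]; apply in_seq in Ht; lia. Qed.

Lemma in_subcube_indices (cs : list (Z * Z * Z)) (L : nat) (p q r s1 s2 s3 : Z) :
  In ((p, q, r), ((s1, s2), s3))
     (list_prod cs (list_prod (list_prod (offsets L) (offsets L)) (offsets L))) ->
  In (p, q, r) cs /\ In s1 (offsets L) /\ In s2 (offsets L) /\ In s3 (offsets L).
Proof. rewrite !in_prod_iff; tauto. Qed.

Lemma NoDup_shifted_subcubes L u1 u2 u3 cs :
  NoDup cs -> NoDup (shifted_subcubes L u1 u2 u3 cs).
Proof.
  intros Hcs; apply NoDup_map_NoDup_ForallPairs.
  - intros [[[p q] r] [[s1 s2] s3]] [[[p' q'] r'] [[s1' s2'] s3']] Ha Hb Hf.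
    apply in_subcube_indices in Ha as (_ & a1 & a2 & a3).
    apply in_subcube_indices in Hb as (_ & b1 & b2 & b3).
    apply in_offsets in a1, a2, a3, b1, b2, b3.
    simpl in Hf; inversion Hf as [[H1 H2 H3]].
    destruct (Z_mul_add_inj (Z.of_nat L) p p' s1 s1') as [-> ->]; try lia.
    destruct (Z_mul_add_inj (Z.of_nat L) q q' s2 s2') as [-> ->]; try lia.
    destruct (Z_mul_add_inj (Z.of_nat L) r r' s3 s3') as [-> ->]; try lia.
    reflexivity.
  - apply NoDup_list_prod; auto.
    apply NoDup_list_prod; [apply NoDup_list_prod|];
      apply NoDup_map_NoDup_ForallPairs; try apply seq_NoDup; intros ? ? _ _; lia.
Qed.
Lemma shifted_subcube_coord (p u s : Z) (L : nat) (E x c0 h : R) :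
  0 < E -> (0 <= s)%Z -> (s + 1 <= Z.of_nat L - 1)%Z ->
  IZR u > c0 * E -> IZR u - c0 * E <= 1 ->
  h = INR L * / E ->
  IZR (p * Z.of_nat L + u + s) * / E <= x <= (IZR (p * Z.of_nat L + u + s) + 1) * / E ->
  IZR p * h <= x - c0 <= (IZR p + 1) * h.
Proof.
  intros HE Hs Hs2 Hu1 Hu2 -> [Hx1 Hx2].
  assert (HiE : 0 < / E) by (apply Rinv_0_lt_compat; lra).
  assert (Hs' : 0 <= IZR s) by (apply IZR_le; lia).
  assert (Hs2' : IZR s + 1 <= INR L - 1).
  { rewrite INR_IZR_INZ, <- plus_IZR, <- minus_IZR; apply IZR_le; lia. }
  assert (A1 : IZR u * / E > c0).
  { replace c0 with (c0 * E * / E) by (field; lra). apply Rmult_lt_compat_r; lra. }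
  assert (A2 : IZR u * / E <= c0 + / E).
  { replace (c0 + / E) with ((c0 * E + 1) * / E) by (field; lra).
    apply Rmult_le_compat_r; lra. }
  assert (A3 : 0 <= IZR s * / E) by (apply Rmult_le_pos; lra).
  assert (A4 : (IZR s + 1) * / E <= (INR L - 1) * / E) by (apply Rmult_le_compat_r; lra).
  rewrite !plus_IZR, mult_IZR, <- INR_IZR_INZ in Hx1, Hx2.
  split; nra.
Qed.

Lemma cube_family_translate (S : R3 -> Prop) (c : R3) (k j : nat) (cs : list (Z * Z * Z)) :
  NoDup cs -> (forall d, In d cs -> cube_in S k d) ->
  exists l, NoDup l /\
    (forall d, In d l -> cube_in (fun x => S (vsub x c)) (k + j) d) /\
    length l = (length cs * ((2 ^ j - 1) * (2 ^ j - 1) * (2 ^ j - 1)))%nat.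
Proof.
  intros Hnd Hin; destruct c as [[c1 c2] c3].
  set (E := 2 ^ (k + j)); set (L := (2 ^ j)%nat).
  assert (HE : 0 < E) by (apply pow_lt; lra).
  assert (Hh : / 2 ^ k = INR L * / E).
  { unfold L, E; rewrite pow_INR, pow_add; replace (INR 2) with 2 by (simpl; ring).
    field; split; apply pow_nonzero; lra. }
  exists (shifted_subcubes L (up (c1 * E)) (up (c2 * E)) (up (c3 * E)) cs).
  split; [|split].
  - now apply NoDup_shifted_subcubes.
  - intros d Hd [[x1 x2] x3] Hx.
    apply in_map_iff in Hd as [[[[p q] r] [[s1 s2] s3]] [<- Ha]].
    apply in_subcube_indices in Ha as (Hc & a1 & a2 & a3).
    apply in_offsets in a1, a2, a3.
    apply (Hin _ Hc); simpl in Hx |- *; fold E in Hx; destruct Hx as (X1 & X2 & X3).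
    destruct (archimed (c1 * E)), (archimed (c2 * E)), (archimed (c3 * E)).
    split; [|split]; eapply shifted_subcube_coord; eauto; tauto.
  - unfold shifted_subcubes, offsets.
    now rewrite length_map, !length_prod, length_map, length_seq.
Qed.

Lemma cube_ratio_ge q : 1 <= q ->
  1 - 3 / q <= ((q - 1) * (q - 1) * (q - 1)) / (q * q * q).
Proof.
  intros Hq; apply (Rmult_le_reg_r (q * q * q)); [nra|].
  replace ((q - 1) * (q - 1) * (q - 1) / (q * q * q) * (q * q * q))
    with ((q - 1) * (q - 1) * (q - 1)) by (field; lra).
  replace ((1 - 3 / q) * (q * q * q)) with (q * q * q - 3 * q * q) by (field; lra).
  nra.
Qed.

Lemma refined_volume_gt a t q : 0 <= t < a -> 1 <= q -> 3 * a < q * (a - t) ->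
  a * (((q - 1) * (q - 1) * (q - 1)) / (q * q * q)) > t.
Proof.
  intros Hat Hq Hlarge.
  assert (a * (1 - 3 / q) > t).
  { replace (a * (1 - 3 / q)) with (a - 3 * a / q) by (field; lra).
    assert (3 * a / q < a - t).
    { apply (Rmult_lt_reg_r q); [lra|].
      replace (3 * a / q * q) with (3 * a) by (field; lra); lra. }
    lra. }
  pose proof (Rmult_le_compat_l a _ _ ltac:(lra) (cube_ratio_ge q Hq)); lra.
Qed.

(* Translations do not preserve the dyadic grid, but refining by [q = 2^j] per
   side before translating loses only a fraction [<= 3 / q] of the volume. *)
Lemma eventually_inner_gt_translate (S : R3 -> Prop) (c : R3) (t a : R) :
  0 <= t -> inner_approx S a -> t < a -> eventually_inner_gt (fun x => S (vsub x c)) t.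
Proof.
  intros Ht (k & cs & Hnd & Hin & Ha) Hta.
  destruct (INR_archimed 1 (3 * a / (a - t))) as [J HJ]; [lra|].
  exists (k + J)%nat; intros m Hm.
  destruct (cube_family_translate S c k (m - k) cs Hnd Hin) as (l & Hl1 & Hl2 & Hl3).
  replace (k + (m - k))%nat with m in Hl2 by lia.
  exists l; split; [exact Hl1|split; [exact Hl2|]].
  set (q := 2 ^ (m - k)).
  assert (Hq1 : 1 <= q) by (apply pow_R1_Rle; lra).
  assert (HqJ : INR J <= q).
  { apply Rle_trans with (2 ^ J); [|apply Rle_pow; [lra|lia]].
    replace 2 with (INR 2) by (simpl; ring); rewrite <- pow_INR.
    apply le_INR, Nat.lt_le_incl, Nat.pow_gt_lin_r; lia. }
  assert (Hlarge : 3 * a < q * (a - t)).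
  { apply (Rmult_lt_compat_r (a - t)) in HJ; [|lra].
    replace (3 * a / (a - t) * (a - t)) with (3 * a) in HJ by (field; lra). nra. }
  assert (Hlen : INR (length l) = INR (length cs) * ((q - 1) * (q - 1) * (q - 1))).
  { assert (Hq1n : (1 <= 2 ^ (m - k))%nat).
    { pose proof (Nat.pow_le_mono_r 2 0 (m - k)); simpl in *; lia. }
    rewrite Hl3, !mult_INR, minus_INR, pow_INR by exact Hq1n.
    replace (INR 2) with 2 by (simpl; ring); reflexivity. }
  assert (H8 : 8 ^ m = 8 ^ k * (q * q * q)).
  { unfold q; rewrite <- !Rpow_mult_distr; replace (2 * 2 * 2) with 8 by ring.
    rewrite <- pow_add; f_equal; lia. }
  assert (H8k : 0 < 8 ^ k) by (apply pow_lt; lra).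
  unfold cubes_vol; rewrite Hlen, H8.
  replace (INR (length cs) * ((q - 1) * (q - 1) * (q - 1)) / (8 ^ k * (q * q * q)))
    with (a * (((q - 1) * (q - 1) * (q - 1)) / (q * q * q))) by (rewrite Ha; field; lra).
  apply refined_volume_gt; lra.
Qed.
(* A neighbour [a] of the origin satisfies [|a| >= 2] (else [a/2] lies in both
   open balls), and [|x|^2 <= |x - a|^2] then follows coordinatewise from
   [0 <= x_i <= 1/4]. *)
Lemma dcube_in_voronoi0_cap (F : R3 -> Prop) : unit_ball_packing F -> F origin ->
  cube_in (fun x => voronoi0 F x /\ cball origin (sqrt 2) x) 2 (0%Z, 0%Z, 0%Z).
Proof.
  intros HF H0 [[x1 x2] x3] Hx; simpl in Hx.
  replace (/ (2 * (2 * 1))) with (/ 4) in Hx by field.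
  rewrite Rmult_0_l, Rplus_0_l, Rmult_1_l in Hx.
  destruct Hx as [[X1 X1'] [[X2 X2'] [X3 X3']]].
  split.
  - intros [[a1 a2] a3] Ha.
    destruct (Req_dec (a1 * a1 + a2 * a2 + a3 * a3) 0) as [Z|Z].
    + assert (a1 = 0) by nra; assert (a2 = 0) by nra; assert (a3 = 0) by nra; subst.
      apply Req_le; reflexivity.
    + assert (Hne : (a1, a2, a3) <> origin) by (intro E; inversion E; subst; apply Z; ring).
      assert (Hbig : 4 <= a1 * a1 + a2 * a2 + a3 * a3).
      { apply Rnot_lt_le; intro Hl; apply (HF _ _ Ha H0 Hne (a1 / 2, a2 / 2, a3 / 2)).
        assert (Hs : forall s, 0 <= s -> s < 1 -> sqrt s < 1).
        { intros s Hs1 Hs2; rewrite <- sqrt_1; apply sqrt_lt_1_alt; lra. }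
        unfold oball, dist3, norm3; simpl; split; apply Hs; nra. }
      unfold dist3, norm3; simpl; apply sqrt_le_1_alt.
      assert (0 <= x1 * ((a1 - 1) * (a1 - 1))) by (apply Rmult_le_pos; [lra|apply Rle_0_sqr]).
      assert (0 <= x2 * ((a2 - 1) * (a2 - 1))) by (apply Rmult_le_pos; [lra|apply Rle_0_sqr]).
      assert (0 <= x3 * ((a3 - 1) * (a3 - 1))) by (apply Rmult_le_pos; [lra|apply Rle_0_sqr]).
      assert (x1 * (a1 * a1) <= / 4 * (a1 * a1)) by (apply Rmult_le_compat_r; [nra|lra]).
      assert (x2 * (a2 * a2) <= / 4 * (a2 * a2)) by (apply Rmult_le_compat_r; [nra|lra]).
      assert (x3 * (a3 * a3) <= / 4 * (a3 * a3)) by (apply Rmult_le_compat_r; [nra|lra]).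
      nra.
  - unfold cball, dist3, norm3; simpl; apply sqrt_le_1_alt; nra.
Qed.

Lemma voronoi0_cap_inner_approx (F : R3 -> Prop) : unit_ball_packing F -> F origin ->
  inner_approx (fun x => voronoi0 F x /\ cball origin (sqrt 2) x) (/ 64).
Proof.
  intros HF H0; exists 2%nat, ((0%Z, 0%Z, 0%Z) :: nil).
  split; [repeat constructor; simpl; tauto|split].
  - intros d [<-|[]]; now apply dcube_in_voronoi0_cap.
  - simpl; field.
Qed.

Lemma inner_approx_gt_of_vol3 (S : R3 -> Prop) (t : R) :
  (exists a, inner_approx S a) -> (forall v, vol3 S v -> t < v) ->
  exists a, inner_approx S a /\ t < a.
Proof.
  intros Hne Hvol; apply NNPP; intro Hno.
  assert (Hub : is_upper_bound (inner_approx S) t).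
  { intros a Ha; apply Rnot_lt_le; intro Hlt; apply Hno; now exists a. }
  destruct (completeness (inner_approx S) (ex_intro _ t Hub) Hne) as [v Hv].
  pose proof (Hvol v Hv); pose proof (proj2 Hv t Hub); lra.
Qed.

Section Hypothesis_on_voronoi_cells.

Hypothesis voronoi_density :
  forall (F : R3 -> Prop), unit_ball_packing F -> F origin ->
    forall vB vP : R, vol3 Bunit vB ->
      vol3 (fun x => voronoi0 F x /\ cball origin (sqrt 2) x) vP -> vB / vP < 0.7547.

Lemma voronoi0_cap_inner_gt (F : R3 -> Prop) (vB : R) :
  unit_ball_packing F -> F origin -> vol3 Bunit vB ->
  exists a, inner_approx (fun x => voronoi0 F x /\ cball origin (sqrt 2) x) a /\
    vB / 0.7547 < a.
Proof.
  intros HF H0 HB.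
  assert (Hsmall := voronoi0_cap_inner_approx F HF H0).
  apply inner_approx_gt_of_vol3; [now exists (/ 64)|].
  intros vP HP.
  assert (HvP : / 64 <= vP) by now apply HP.
  pose proof (voronoi_density F HF H0 vB vP HB HP) as Hr.
  apply (Rmult_lt_compat_r vP) in Hr; [|lra].
  replace (vB / vP * vP) with vB in Hr by (field; lra).
  apply (Rmult_lt_reg_r 0.7547); [lra|].
  replace (vB / 0.7547 * 0.7547) with vB by (field; lra).
  lra.
Qed.

End Hypothesis_on_voronoi_cells.
Lemma disjoint_families_eventually_gt (T : nat -> R3 -> Prop) (t : R) (N : nat) :
  (forall i, (i < S N)%nat -> eventually_inner_gt (T i) t) ->
  (forall i j m d, (i < S N)%nat -> (j < S N)%nat -> i <> j ->
     cube_in (T i) m d -> cube_in (T j) m d -> False) ->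
  exists M, forall m, (M <= m)%nat -> exists L, NoDup L /\
    (forall d, In d L -> exists i, (i < S N)%nat /\ cube_in (T i) m d) /\
    cubes_vol m L > INR (S N) * t.
Proof.
  induction N as [|N IH]; intros Hfam Hdis.
  - destruct (Hfam 0%nat ltac:(lia)) as [M HM]; exists M; intros m Hm.
    destruct (HM m Hm) as (l & Hl1 & Hl2 & Hl3); exists l.
    split; [exact Hl1|split; [|simpl; lra]].
    intros d Hd; exists 0%nat; split; [lia|now apply Hl2].
  - destruct IH as [M1 HM1].
    { intros i Hi; apply Hfam; lia. }
    { intros i j m d Hi Hj; apply Hdis; lia. }
    destruct (Hfam (S N) ltac:(lia)) as [M2 HM2].
    exists (Nat.max M1 M2); intros m Hm.
    destruct (HM1 m ltac:(lia)) as (L & L1 & L2 & L3).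
    destruct (HM2 m ltac:(lia)) as (l & l1 & l2 & l3).
    exists (L ++ l); split; [|split].
    + apply NoDup_app; auto; intros d HdL Hdl.
      destruct (L2 d HdL) as (i & Hi & Hc).
      apply (Hdis i (S N) m d); auto; lia.
    + intros d Hd; apply in_app_or in Hd as [Hd|Hd].
      * destruct (L2 d Hd) as (i & Hi & Hc); exists i; split; [lia|exact Hc].
      * exists (S N); split; [lia|now apply l2].
    + rewrite cubes_vol_app, (S_INR (S N)); lra.
Qed.

Section Finite_packing.

Variables (n : nat) (c : nat -> R3).

Hypothesis packing : forall i j, (i < n)%nat -> (j < n)%nat -> i <> j ->
  forall x, ~ (oball (c i) 1 x /\ oball (c j) 1 x).

Definition centers_from (i : nat) (y : R3) : Prop :=
  exists j, (j < n)%nat /\ y = vsub (c j) (c i).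

Definition translated_cell (i : nat) (x : R3) : Prop :=
  voronoi0 (centers_from i) (vsub x (c i)) /\ cball origin (sqrt 2) (vsub x (c i)).

Lemma centers_distinct i j : (i < n)%nat -> (j < n)%nat -> i <> j -> c i <> c j.
Proof.
  intros Hi Hj Hij E; apply (packing i j Hi Hj Hij (c i)).
  unfold oball; rewrite <- E, dist3_diag; lra.
Qed.

Lemma centers_from_packing i : unit_ball_packing (centers_from i).
Proof.
  intros y y' (j & Hj & ->) (j' & Hj' & ->) Hne x [Ho1 Ho2].
  assert (Hjj : j <> j') by (intros ->; now apply Hne).
  apply (packing j j' Hj Hj' Hjj (vadd x (c i))); unfold oball in *.
  rewrite <- (vsub_vadd x (c i)), dist3_vsub2 in Ho1, Ho2; tauto.
Qed.

Lemma centers_from_origin i : (i < n)%nat -> centers_from i origin.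
Proof. intros Hi; exists i; split; [exact Hi|symmetry; apply vsub_diag]. Qed.

(* Two translated cells only meet in the bisector plane of their centres. *)
Lemma translated_cells_no_common_cube i j m d :
  (i < n)%nat -> (j < n)%nat -> i <> j ->
  cube_in (translated_cell i) m d -> cube_in (translated_cell j) m d -> False.
Proof.
  intros Hi Hj Hij Ti Tj; apply (centers_distinct i j Hi Hj Hij).
  apply (dcube_equidistant_eq m d); intros x Hx.
  destruct (Ti x Hx) as [Vi _], (Tj x Hx) as [Vj _].
  assert (Ai := Vi (vsub (c j) (c i)) ltac:(now exists j)).
  assert (Aj := Vj (vsub (c i) (c j)) ltac:(now exists i)).
  rewrite dist3_vsub_origin, dist3_vsub2 in Ai, Aj; lra.
Qed.

End Finite_packing.

Lemma sqrt2_le_rhat : sqrt 2 <= 1.58731.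
Proof. rewrite <- (sqrt_square 1.58731) by lra; apply sqrt_le_1_alt; lra. Qed.

Theorem mainTheorem13 :
  (forall (F : R3 -> Prop), unit_ball_packing F -> F origin ->
     forall vB vP : R,
       vol3 Bunit vB ->
       vol3 (fun x => voronoi0 F x /\ cball origin (sqrt 2) x) vP ->
       vB / vP < 0.7547) ->
  forall (n : nat) (c : nat -> R3),
    (1 <= n)%nat ->
    (forall i j, (i < n)%nat -> (j < n)%nat -> i <> j ->
       forall x, ~ (oball (c i) 1 x /\ oball (c j) 1 x)) ->
    forall vB vU : R,
      vol3 Bunit vB ->
      vol3 (fun x => exists i, (i < n)%nat /\ cball (c i) 1.58731 x) vU ->
      INR n * vB / vU < 0.7547.
Proof.
  intros Hyp [|N] c Hn Hpack vB vU HB HU; [lia|].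
  set (t := vB / 0.7547).
  assert (Ht : 0 <= t) by (pose proof (vol3_ge0 _ _ HB); unfold t; lra).
  assert (Hcells : forall i, (i < S N)%nat -> eventually_inner_gt (translated_cell (S N) c i) t).
  { intros i Hi.
    destruct (voronoi0_cap_inner_gt Hyp (centers_from (S N) c i) vB) as (a & Ha & Hta);
      auto using centers_from_packing, centers_from_origin.
    exact (eventually_inner_gt_translate _ (c i) t a Ht Ha Hta). }
  destruct (disjoint_families_eventually_gt _ t N Hcells
              (translated_cells_no_common_cube (S N) c Hpack)) as [M HM].
  destruct (HM M (le_n M)) as (L & L1 & L2 & L3).
  assert (HvU : cubes_vol M L <= vU).
  { apply HU; exists M, L; split; [exact L1|split; [|reflexivity]].
    intros d Hd x Hx; destruct (L2 d Hd) as (i & Hi & Hc); exists i; split; [exact Hi|].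
    destruct (Hc x Hx) as [_ Hb]; unfold cball in *; rewrite dist3_vsub_origin in Hb.
    pose proof sqrt2_le_rhat; lra. }
  assert (Hn1 : 1 <= INR (S N)) by (apply (le_INR 1); lia).
  assert (Hlt : INR (S N) * vB < 0.7547 * vU) by (unfold t in L3; lra).
  apply (Rmult_lt_reg_r vU); [nra|].
  unfold Rdiv; rewrite Rmult_assoc, Rinv_l, Rmult_1_r by nra; lra.
Qed.
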